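(* For every $\alpha>0$, the Alexander operator $C_0(f)(z)=\int_0^z\frac{f(w)}{w}\,dw$ is a bounded linear operator from $(\mathcal{B}_\alpha^0,\|\cdot\|_{\mathcal{B}_\alpha})$ to itself, and its operator norm equals $1$.
   Context: $\mathbb{D}=\{z\in\mathbb{C}:|z|<1\}$. For $\alpha>0$, the $\alpha$-Bloch space $\mathcal{B}_\alpha$ is the space of analytic functions $f$ on $\mathbb{D}$ with $\|f\|_{\mathcal{B}_\alpha}:=\sup_{z\in\mathbb{D}}(1-|z|^2)^\alpha|f'(z)|<\infty$. $\mathcal{B}_\alpha^0=\{f\in\mathcal{B}_\alpha: f(0)=0\}$, normed by $\|\cdot\|_{\mathcal{B}_\alpha}$. *)

From Stdlib Require Import Reals.
From Stdlib Require Import ClassicalEpsilon.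
From Coquelicot Require Import Coquelicot.
Open Scope R_scope.

Definition in_disc (z : C) : Prop := Cmod z < 1.

Definition cderivable_at (f : C -> C) (z l : C) : Prop :=
  @is_derive C_AbsRing C_NormedModule f z l.

Definition analytic_on_disc (f : C -> C) : Prop :=
  forall z : C, in_disc z -> exists l : C, cderivable_at f z l.

Definition cderiv (f : C -> C) (z : C) : C :=
  epsilon (inhabits (RtoC 0)) (fun l : C => cderivable_at f z l).

Definition bloch_weight (alpha : R) (f : C -> C) (z : C) : R :=
  Rpower (1 - Cmod z ^ 2) alpha * Cmod (cderiv f z).

Definition in_Bloch (alpha : R) (f : C -> C) : Prop :=
  analytic_on_disc f /\
  exists M : R, forall z : C, in_disc z -> bloch_weight alpha f z <= M.

Definition in_Bloch0 (alpha : R) (f : C -> C) : Prop :=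
  in_Bloch alpha f /\ f 0%C = 0%C.

Definition bloch_norm (alpha : R) (f : C -> C) : R :=
  real (Lub_Rbar (fun r : R => exists z : C, in_disc z /\ r = bloch_weight alpha f z)).

(* Alexander operator: C_0(f)(z) = \int_0^z f(w)/w dw, the integral taken
   along the segment w = t z, t in [0,1] (dw = z dt). *)
Definition Alexander (f : C -> C) (z : C) : C :=
  @RInt C_R_CompleteNormedModule
    (fun t : R => (f (RtoC t * z)%C / (RtoC t * z)%C * z)%C) 0 1.

From Stdlib Require Import Reals Lra Lia Psatz ClassicalEpsilon FunctionalExtensionality.
From Coquelicot Require Import Coquelicot.
Open Scope R_scope.

(* For [f] in B_alpha^0, C_0 f is the radial primitive [z |-> \int_[0,z] g] of
   [g w = f w / w], extended by [g 0 = f'(0)], which is continuous on the disc and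
   holomorphic off 0.  Goursat's bisection argument, first in closed convex sets avoiding 0
   and then, after shrinking the corner at 0, on triangles with a vertex at 0, shows that
   the contour integral of [g] over every small triangle [0, z0, w] vanishes; hence
   (C_0 f)' = g.  The mean value inequality along [0, z] with
   [|f'(t z)| <= ||f|| (1 - |z|^2)^(-alpha)] gives [(1 - |z|^2)^alpha |f z / z| <= ||f||],
   i.e. ||C_0 f|| <= ||f||; equality holds for the identity, which C_0 fixes. *)

(** * Complex differentiability *)

Definition has_cderiv (f : C -> C) (z l : C) : Prop :=
  forall eps, 0 < eps -> exists del, 0 < del /\ forall w, Cmod (w - z) < del ->
    Cmod (f w - f z - l * (w - z)) <= eps * Cmod (w - z).

Definition ccontinuous_at (G : C -> C) (w : C) : Prop :=
  forall eps, 0 < eps -> exists del, 0 < del /\ forall v, Cmod (v - w) < del ->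
    Cmod (G v - G w) < eps.

Lemma Cmod_scal (t : R) (z : C) : 0 <= t -> Cmod (RtoC t * z) = t * Cmod z.
Proof. intros Ht. rewrite Cmod_mult, Cmod_R, Rabs_pos_eq; lra. Qed.

Lemma Cmod_sub_sym (x y : C) : Cmod (x - y) = Cmod (y - x).
Proof. rewrite <- Cmod_opp. f_equal. ring. Qed.

Lemma le_0_of_le_small (x c d : R) :
  0 < d -> (forall eps, 0 < eps < d -> x <= eps * c) -> x <= 0.
Proof.
  intros Hd H. destruct (Rle_dec c 0) as [Hc|Hc].
  - specialize (H (d / 2) ltac:(lra)). nra.
  - destruct (Rle_dec x 0) as [|Hx]; [assumption|].
    set (eps := Rmin (d / 2) (x / (2 * c))).
    assert (He : 0 < eps) by (apply Rmin_pos; [lra | apply Rdiv_lt_0_compat; lra]).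
    assert (Hex : eps * c <= x / 2).
    { apply Rle_trans with (x / (2 * c) * c); [apply Rmult_le_compat_r; [lra | apply Rmin_r]|].
      right; field; lra. }
    assert (Hed : eps < d) by (unfold eps; generalize (Rmin_l (d / 2) (x / (2 * c))); lra).
    specialize (H eps (conj He Hed)). lra.
Qed.

Lemma cderivable_atE (f : C -> C) (z l : C) : cderivable_at f z l <-> has_cderiv f z l.
Proof.
  split.
  - intros [_ H] eps Heps.
    destruct (H z (fun P HP => HP) (mkposreal eps Heps)) as [d Hd].
    exists d. split; [apply cond_pos|].
    intros w Hw. specialize (Hd w Hw). simpl in Hd.
    replace (l * (w - z))%C with ((w - z) * l)%C by ring. exact Hd.
  - intros H. split; [apply is_linear_scal_l|].
    intros x Hx.
    apply (is_filter_lim_locally_unique (V:=AbsRing_NormedModule C_AbsRing)) in Hx. subst x.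
    intros eps. destruct (H eps (cond_pos eps)) as [d [Hd0 Hd]].
    exists (mkposreal _ Hd0). intros y Hy. specialize (Hd y Hy). simpl.
    change (Cmod (f y - f z - (y - z) * l)%C <= eps * Cmod (y - z)%C).
    replace ((y - z) * l)%C with (l * (y - z))%C by ring. exact Hd.
Qed.

Lemma has_cderiv_unique (f : C -> C) (z l1 l2 : C) :
  has_cderiv f z l1 -> has_cderiv f z l2 -> l1 = l2.
Proof.
  intros H1 H2. apply Ceq_minus, Cmod_eq_0.
  apply Rle_antisym; [|apply Cmod_ge_0].
  apply (le_0_of_le_small _ 2 1); [lra|]. intros eps [He _].
  destruct (H1 eps He) as [d1 [Hd1 B1]], (H2 eps He) as [d2 [Hd2 B2]].
  set (h := Rmin d1 d2 / 2).
  assert (Hh : 0 < h) by (unfold h; apply Rdiv_lt_0_compat; [apply Rmin_pos|]; lra).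
  assert (Ew : Cmod (z + RtoC h - z) = h).
  { replace (z + RtoC h - z)%C with (RtoC h) by ring. rewrite Cmod_R, Rabs_pos_eq; lra. }
  specialize (B1 (z + RtoC h)%C ltac:(rewrite Ew; unfold h; generalize (Rmin_l d1 d2); lra)).
  specialize (B2 (z + RtoC h)%C ltac:(rewrite Ew; unfold h; generalize (Rmin_r d1 d2); lra)).
  rewrite Ew in B1, B2.
  assert (E : ((l1 - l2) * (z + RtoC h - z))%C
              = ((f (z + RtoC h) - f z - l2 * (z + RtoC h - z))
                 - (f (z + RtoC h) - f z - l1 * (z + RtoC h - z)))%C) by ring.
  assert (Hle : Cmod (l1 - l2) * h <= 2 * eps * h).
  { rewrite <- Ew at 1. rewrite <- Cmod_mult, E.
    eapply Rle_trans; [apply Cmod_triangle|]. rewrite Cmod_opp. lra. }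
  apply (Rmult_le_reg_r h); lra.
Qed.

Lemma has_cderiv_continuous (f : C -> C) (z l : C) : has_cderiv f z l -> ccontinuous_at f z.
Proof.
  intros H eps He.
  destruct (H 1 ltac:(lra)) as [d [Hd B]].
  assert (Hl : 0 <= Cmod l) by apply Cmod_ge_0.
  exists (Rmin d (eps / (Cmod l + 2))).
  split; [apply Rmin_pos; [lra | apply Rdiv_lt_0_compat; lra]|].
  intros w Hw.
  assert (Hw1 : Cmod (w - z) < d) by (eapply Rlt_le_trans; [exact Hw | apply Rmin_l]).
  assert (Hw2 : Cmod (w - z) < eps / (Cmod l + 2)) by (eapply Rlt_le_trans; [exact Hw | apply Rmin_r]).
  specialize (B w Hw1).
  replace (f w - f z)%C with ((f w - f z - l * (w - z)) + l * (w - z))%C by ring.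
  eapply Rle_lt_trans; [apply Cmod_triangle|]. rewrite Cmod_mult.
  assert (0 <= Cmod (w - z)) by apply Cmod_ge_0.
  apply Rle_lt_trans with ((Cmod l + 2) * Cmod (w - z)); [nra|].
  apply Rlt_le_trans with ((Cmod l + 2) * (eps / (Cmod l + 2))); [apply Rmult_lt_compat_l; lra|].
  right; field; lra.
Qed.

Lemma has_cderiv_mul (f g : C -> C) (w a b : C) :
  has_cderiv f w a -> has_cderiv g w b ->
  has_cderiv (fun v => f v * g v)%C w (a * g w + f w * b)%C.
Proof.
  intros Hf Hg eps He.
  set (A := Cmod a). set (F := Cmod (f w)). set (Gw := Cmod (g w)).
  assert (HA : 0 <= A) by apply Cmod_ge_0. assert (HF : 0 <= F) by apply Cmod_ge_0.
  assert (HG : 0 <= Gw) by apply Cmod_ge_0.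
  destruct (Hf (eps / (3 * (Gw + 1)))) as [d1 [Hd1 B1]]; [apply Rdiv_lt_0_compat; lra|].
  destruct (Hg (eps / (3 * (F + 1)))) as [d2 [Hd2 B2]]; [apply Rdiv_lt_0_compat; lra|].
  destruct (has_cderiv_continuous g w b Hg (Rmin 1 (eps / (3 * (A + 1))))) as [d3 [Hd3 B3]].
  { apply Rmin_pos; [lra | apply Rdiv_lt_0_compat; lra]. }
  exists (Rmin d1 (Rmin d2 d3)). split; [repeat apply Rmin_pos; auto|].
  intros v Hv.
  specialize (B1 v ltac:(eapply Rlt_le_trans; [exact Hv | apply Rmin_l])).
  specialize (B2 v ltac:(eapply Rlt_le_trans; [exact Hv | eapply Rle_trans; [apply Rmin_r | apply Rmin_l]])).
  specialize (B3 v ltac:(eapply Rlt_le_trans; [exact Hv | eapply Rle_trans; [apply Rmin_r | apply Rmin_r]])).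
  assert (B3a : Cmod (g v - g w) < 1) by (eapply Rlt_le_trans; [exact B3 | apply Rmin_l]).
  assert (B3b : Cmod (g v - g w) < eps / (3 * (A + 1))) by (eapply Rlt_le_trans; [exact B3 | apply Rmin_r]).
  assert (Hgv : Cmod (g v) <= Gw + 1).
  { replace (g v) with ((g v - g w) + g w)%C by ring.
    eapply Rle_trans; [apply Cmod_triangle|]. unfold Gw; lra. }
  replace (f v * g v - f w * g w - (a * g w + f w * b) * (v - w))%C with
    ((f v - f w - a * (v - w)) * g v + f w * (g v - g w - b * (v - w))
     + a * (v - w) * (g v - g w))%C by ring.
  set (D := Cmod (v - w)). assert (HD : 0 <= D) by apply Cmod_ge_0.
  eapply Rle_trans; [apply Cmod_triangle|].
  eapply Rle_trans; [apply Rplus_le_compat_r; apply Cmod_triangle|].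
  rewrite !Cmod_mult. fold A F D.
  assert (T1 : Cmod (f v - f w - a * (v - w)) * Cmod (g v) <= eps / 3 * D).
  { apply Rle_trans with (eps / (3 * (Gw + 1)) * D * (Gw + 1)).
    - apply Rmult_le_compat; auto using Cmod_ge_0.
    - right. field. lra. }
  assert (T2 : F * Cmod (g v - g w - b * (v - w)) <= eps / 3 * D).
  { apply Rle_trans with ((F + 1) * (eps / (3 * (F + 1)) * D)).
    - apply Rmult_le_compat; auto using Cmod_ge_0; lra.
    - right. field. lra. }
  assert (T3 : A * D * Cmod (g v - g w) <= eps / 3 * D).
  { apply Rle_trans with ((A + 1) * D * (eps / (3 * (A + 1)))).
    - apply Rmult_le_compat; auto using Cmod_ge_0; nra.
    - right. field. lra. }
  lra.
Qed.

Lemma has_cderiv_inv (w : C) : w <> 0%C -> has_cderiv (fun v => / v)%C w (- (/ w * / w))%C.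
Proof.
  intros Hw eps He.
  assert (Hp : 0 < Cmod w) by (apply Cmod_gt_0; auto).
  assert (Hw3 : 0 < Cmod w * Cmod w * Cmod w) by (repeat apply Rmult_lt_0_compat; lra).
  exists (Rmin (Cmod w / 2) (eps * (Cmod w * Cmod w * Cmod w) / 2)).
  split; [apply Rmin_pos; [lra | apply Rdiv_lt_0_compat; [apply Rmult_lt_0_compat|]; lra]|].
  intros v Hv.
  assert (Hv1 : Cmod (v - w) < Cmod w / 2) by (eapply Rlt_le_trans; [exact Hv | apply Rmin_l]).
  assert (Hv2 : Cmod (v - w) < eps * (Cmod w * Cmod w * Cmod w) / 2)
    by (eapply Rlt_le_trans; [exact Hv | apply Rmin_r]).
  assert (Hvw : Cmod w / 2 <= Cmod v).
  { assert (Cmod w <= Cmod v + Cmod (v - w)).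
    { replace w with (v - (v - w))%C at 1 by ring.
      eapply Rle_trans; [apply Cmod_triangle|]. rewrite Cmod_opp. lra. }
    lra. }
  assert (Hv0 : v <> 0%C) by (apply Cmod_gt_0; lra).
  assert (Hden : 0 < Cmod v * Cmod w * Cmod w) by (repeat apply Rmult_lt_0_compat; lra).
  replace (/ v - / w - - (/ w * / w) * (v - w))%C with ((v - w) * (v - w) / (v * w * w))%C
    by (field; auto).
  rewrite Cmod_div by (apply Cmod_gt_0; rewrite !Cmod_mult; lra).
  rewrite !Cmod_mult.
  assert (0 <= Cmod (v - w)) by apply Cmod_ge_0.
  apply (Rmult_le_reg_r (Cmod v * Cmod w * Cmod w)); auto.
  unfold Rdiv. rewrite Rmult_assoc, Rinv_l, Rmult_1_r by lra.
  assert (Cmod w * Cmod w * Cmod w / 2 <= Cmod v * Cmod w * Cmod w)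
    by (assert (0 < Cmod w * Cmod w) by nra; nra).
  assert (Cmod (v - w) <= eps * (Cmod v * Cmod w * Cmod w)) by nra.
  nra.
Qed.

Lemma has_cderiv_ext_loc (f g : C -> C) (w l : C) (rho : R) :
  0 < rho -> (forall v, Cmod (v - w) < rho -> f v = g v) -> has_cderiv f w l -> has_cderiv g w l.
Proof.
  intros Hr Heq H eps He. destruct (H eps He) as [d [Hd B]].
  exists (Rmin d rho). split; [apply Rmin_pos; auto|].
  intros v Hv.
  rewrite <- (Heq v), <- (Heq w).
  - apply B. eapply Rlt_le_trans; [exact Hv | apply Rmin_l].
  - replace (w - w)%C with (RtoC 0) by ring. rewrite Cmod_0. lra.
  - eapply Rlt_le_trans; [exact Hv | apply Rmin_r].
Qed.

Lemma has_cderiv_id (z : C) : has_cderiv (fun w => w) z 1%C.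
Proof.
  intros eps He. exists 1. split; [lra|]. intros w _.
  replace (w - z - 1 * (w - z))%C with (RtoC 0) by ring. rewrite Cmod_0.
  generalize (Cmod_ge_0 (w - z)). nra.
Qed.

Lemma cderivP (f : C -> C) (z : C) :
  (exists l, cderivable_at f z l) -> has_cderiv f z (cderiv f z).
Proof.
  intros H. apply cderivable_atE.
  exact (epsilon_spec (inhabits (RtoC 0)) (fun l => cderivable_at f z l) H).
Qed.

Lemma cderiv_eq (f : C -> C) (z l : C) : has_cderiv f z l -> cderiv f z = l.
Proof.
  intros H. apply (has_cderiv_unique f z); [|exact H].
  apply cderivP. exists l. apply cderivable_atE, H.
Qed.

Lemma ccontinuous_at_const (c w : C) : ccontinuous_at (fun _ => c) w.
Proof.
  intros eps He. exists 1. split; [lra|]. intros v _.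
  replace (c - c)%C with (RtoC 0) by ring. rewrite Cmod_0. lra.
Qed.

Lemma ccontinuous_at_affine (c l q w : C) : ccontinuous_at (fun v => c + l * (v - q))%C w.
Proof.
  intros eps He.
  assert (0 <= Cmod l) by apply Cmod_ge_0.
  exists (eps / (Cmod l + 1)). split; [apply Rdiv_lt_0_compat; lra|].
  intros v Hv.
  replace (c + l * (v - q) - (c + l * (w - q)))%C with (l * (v - w))%C by ring.
  rewrite Cmod_mult.
  assert (0 <= Cmod (v - w)) by apply Cmod_ge_0.
  apply Rle_lt_trans with ((Cmod l + 1) * Cmod (v - w)); [nra|].
  apply Rlt_le_trans with ((Cmod l + 1) * (eps / (Cmod l + 1))).
  - apply Rmult_lt_compat_l; lra.
  - right; field; lra.
Qed.

Lemma ccontinuous_at_sub (G H : C -> C) (w : C) :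
  ccontinuous_at G w -> ccontinuous_at H w -> ccontinuous_at (fun v => G v - H v)%C w.
Proof.
  intros HG HH eps He.
  destruct (HG (eps / 2)) as [d1 [Hd1 H1]]; [lra|].
  destruct (HH (eps / 2)) as [d2 [Hd2 H2]]; [lra|].
  exists (Rmin d1 d2). split; [apply Rmin_pos; auto|].
  intros v Hv.
  specialize (H1 v ltac:(eapply Rlt_le_trans; [exact Hv | apply Rmin_l])).
  specialize (H2 v ltac:(eapply Rlt_le_trans; [exact Hv | apply Rmin_r])).
  replace (G v - H v - (G w - H w))%C with ((G v - G w) - (H v - H w))%C by ring.
  eapply Rle_lt_trans; [apply Cmod_triangle|]. rewrite Cmod_opp. lra.
Qed.

(** * Convex sets and segment integrals *)

Definition is_convex (K : C -> Prop) : Prop :=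
  forall x y t, K x -> K y -> 0 <= t <= 1 -> K (x + RtoC t * (y - x))%C.

Definition is_closed (K : C -> Prop) : Prop :=
  forall q, (forall eps, 0 < eps -> exists w, K w /\ Cmod (w - q) < eps) -> K q.

Lemma Cmod_convex (x y : C) (r t : R) :
  Cmod x <= r -> Cmod y <= r -> 0 <= t <= 1 -> Cmod (x + RtoC t * (y - x))%C <= r.
Proof.
  intros Hx Hy Ht.
  replace (x + RtoC t * (y - x))%C with (RtoC (1 - t) * x + RtoC t * y)%C
    by (rewrite RtoC_minus; ring).
  eapply Rle_trans; [apply Cmod_triangle|].
  rewrite !Cmod_scal by lra. nra.
Qed.

Lemma is_convex_disc (r : R) : is_convex (fun w => Cmod w <= r).
Proof. intros x y t Hx Hy Ht. apply Cmod_convex; assumption. Qed.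

Lemma is_convex_cball (q : C) (r : R) : is_convex (fun w => Cmod (w - q) <= r).
Proof.
  intros x y t Hx Hy Ht.
  replace (x + RtoC t * (y - x) - q)%C with ((x - q) + RtoC t * ((y - q) - (x - q)))%C by ring.
  apply Cmod_convex; assumption.
Qed.

Lemma is_convex_half_plane (k : C) (m : R) : is_convex (fun w => m <= Re (w * k)).
Proof.
  intros x y t Hx Hy Ht.
  replace (Re ((x + RtoC t * (y - x)) * k)%C) with ((1 - t) * Re (x * k) + t * Re (y * k))
    by (destruct x, y, k; simpl; ring).
  nra.
Qed.

Lemma is_convex_and (K L : C -> Prop) :
  is_convex K -> is_convex L -> is_convex (fun w => K w /\ L w).
Proof. intros HK HL x y t [] [] Ht. split; [apply HK | apply HL]; auto. Qed.

Lemma is_closed_disc (r : R) : is_closed (fun w => Cmod w <= r).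
Proof.
  intros p Hp. destruct (Rle_dec (Cmod p) r) as [|Hn]; [assumption|].
  destruct (Hp (Cmod p - r)) as [w [Hw Hwp]]; [lra|].
  assert (Cmod p <= Cmod w + Cmod (w - p)).
  { replace p with (w + - (w - p))%C at 1 by ring.
    rewrite <- (Cmod_opp (w - p)). apply Cmod_triangle. }
  lra.
Qed.

Lemma is_closed_half_plane (k : C) (m : R) : is_closed (fun w => m <= Re (w * k)).
Proof.
  intros p Hp. destruct (Rle_dec m (Re (p * k))) as [|Hn]; [assumption|].
  assert (Hk : 0 <= Cmod k) by apply Cmod_ge_0.
  destruct (Hp ((m - Re (p * k)) / (Cmod k + 1))) as [w [Hw Hwp]].
  { apply Rdiv_lt_0_compat; lra. }
  assert (E : Re (w * k)%C = Re (p * k)%C + Re ((w - p) * k)%C) by (destruct w, p, k; simpl; ring).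
  assert (B := re_le_Cmod ((w - p) * k)%C). rewrite Cmod_mult in B.
  assert (Cmod (w - p) * Cmod k <= (m - Re (p * k)) / (Cmod k + 1) * Cmod k)
    by (apply Rmult_le_compat_r; lra).
  assert ((m - Re (p * k)) / (Cmod k + 1) * Cmod k < m - Re (p * k)).
  { apply Rlt_le_trans with ((m - Re (p * k)) / (Cmod k + 1) * (Cmod k + 1)).
    - apply Rmult_lt_compat_l; [apply Rdiv_lt_0_compat|]; lra.
    - right; field; lra. }
  generalize (Rle_abs (Re ((w - p) * k))). generalize (Rle_abs (- Re ((w - p) * k))).
  rewrite Rabs_Ropp. lra.
Qed.

Lemma is_closed_and (K L : C -> Prop) :
  is_closed K -> is_closed L -> is_closed (fun w => K w /\ L w).
Proof.
  intros HK HL q Hq. split; [apply HK | apply HL];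
    intros eps He; destruct (Hq eps He) as [w [[] Hw]]; eauto.
Qed.

Lemma norm_C_R (z : C) : norm (K:=R_AbsRing) (V:=C_R_NormedModule) z = Cmod z.
Proof.
  destruct z as [x y]. unfold norm; simpl. unfold prod_norm, Cmod; simpl.
  unfold norm; simpl. unfold abs; simpl.
  f_equal; rewrite !Rmult_1_r, <- !Rabs_mult, !Rabs_pos_eq; nra.
Qed.

Lemma scal_C_R (r : R) (z : C) : scal (V:=C_R_NormedModule) r z = (RtoC r * z)%C.
Proof.
  destruct z as [x y].
  apply injective_projections; simpl; unfold scal; simpl; unfold mult; simpl; ring.
Qed.

(* Equalities between values of [RInt] live in [C_R_CompleteNormedModule]; they
   must be retyped in [C] before [ring]/[field] recognise them. *)
Ltac C_eq := match goal with |- ?A = ?B => change (@eq C A B) end.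

Definition seg_integrand (G : C -> C) (x y : C) (t : R) : C :=
  (G (x + RtoC t * (y - x)) * (y - x))%C.

Definition seg (G : C -> C) (x y : C) : C :=
  @RInt C_R_CompleteNormedModule (seg_integrand G x y) 0 1.

Definition ccontinuous_on_seg (G : C -> C) (x y : C) : Prop :=
  forall t, 0 <= t <= 1 -> ccontinuous_at G (x + RtoC t * (y - x))%C.

Lemma ccontinuous_on_seg_convex (G : C -> C) (K : C -> Prop) (x y : C) :
  is_convex K -> (forall w, K w -> ccontinuous_at G w) -> K x -> K y -> ccontinuous_on_seg G x y.
Proof. intros HK HG Hx Hy t Ht. apply HG, HK; assumption. Qed.

Lemma continuous_line_integrand (G : C -> C) (p d : C) (t : R) :
  ccontinuous_at G (p + RtoC t * d)%C ->
  continuous (U:=C_R_CompleteNormedModule) (fun s => (G (p + RtoC s * d) * d)%C) t.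
Proof.
  intros Hc. apply filterlim_locally. intros eps.
  assert (Hd : 0 < Cmod d + 1) by (generalize (Cmod_ge_0 d); lra).
  destruct (Hc (eps / (Cmod d + 1))) as [del [Hdel H]].
  { apply Rdiv_lt_0_compat; [apply cond_pos | lra]. }
  assert (Hp : 0 < del / (Cmod d + 1)) by (apply Rdiv_lt_0_compat; lra).
  exists (mkposreal _ Hp). intros s Hs.
  assert (Hs' : Rabs (s - t) < del / (Cmod d + 1)) by exact Hs.
  apply (norm_compat1 (V:=C_R_NormedModule)). rewrite norm_C_R.
  change (Cmod (G (p + RtoC s * d) * d - G (p + RtoC t * d) * d)%C < eps).
  replace (G (p + RtoC s * d) * d - G (p + RtoC t * d) * d)%C
    with ((G (p + RtoC s * d) - G (p + RtoC t * d)) * d)%C by ring.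
  rewrite Cmod_mult.
  assert (Hv : Cmod ((p + RtoC s * d) - (p + RtoC t * d))%C < del).
  { replace ((p + RtoC s * d) - (p + RtoC t * d))%C with (RtoC (s - t) * d)%C
      by (rewrite RtoC_minus; ring).
    rewrite Cmod_mult, Cmod_R.
    apply Rle_lt_trans with (Rabs (s - t) * (Cmod d + 1)).
    - apply Rmult_le_compat_l; [apply Rabs_pos | lra].
    - apply Rlt_le_trans with (del / (Cmod d + 1) * (Cmod d + 1)).
      + apply Rmult_lt_compat_r; lra.
      + right; field; lra. }
  specialize (H _ Hv).
  assert (0 < eps) by apply cond_pos.
  apply Rle_lt_trans with (eps / (Cmod d + 1) * Cmod d).
  - apply Rmult_le_compat_r; [apply Cmod_ge_0 | lra].
  - apply Rlt_le_trans with (eps / (Cmod d + 1) * (Cmod d + 1)).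
    + apply Rmult_lt_compat_l; [apply Rdiv_lt_0_compat|]; lra.
    + right; field; lra.
Qed.

Lemma ex_RInt_line (G : C -> C) (p d : C) (a b : R) :
  (forall s, Rmin a b <= s <= Rmax a b -> ccontinuous_at G (p + RtoC s * d)%C) ->
  ex_RInt (V:=C_R_CompleteNormedModule) (fun s => (G (p + RtoC s * d) * d)%C) a b.
Proof.
  intros H. apply ex_RInt_continuous. intros s Hs. apply continuous_line_integrand, H, Hs.
Qed.

Lemma ex_RInt_seg (G : C -> C) (x y : C) :
  ccontinuous_on_seg G x y -> ex_RInt (V:=C_R_CompleteNormedModule) (seg_integrand G x y) 0 1.
Proof.
  intros H. apply ex_RInt_line. rewrite Rmin_left, Rmax_right by lra. exact H.
Qed.

Lemma seg_line (G : C -> C) (p d : C) (a b : R) :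
  (forall s, Rmin a b <= s <= Rmax a b -> ccontinuous_at G (p + RtoC s * d)%C) ->
  seg G (p + RtoC a * d) (p + RtoC b * d)
  = @RInt C_R_CompleteNormedModule (fun s => (G (p + RtoC s * d) * d)%C) a b.
Proof.
  intros Hc. unfold seg.
  transitivity (@RInt C_R_CompleteNormedModule
     (fun t => scal (b - a) ((fun s => (G (p + RtoC s * d) * d)%C) ((b - a) * t + a))) 0 1).
  - apply (RInt_ext (V:=C_R_CompleteNormedModule)). intros t _.
    unfold seg_integrand. rewrite scal_C_R.
    replace (p + RtoC a * d + RtoC t * (p + RtoC b * d - (p + RtoC a * d)))%C
      with (p + RtoC ((b - a) * t + a) * d)%C
      by (rewrite RtoC_plus, RtoC_mult, RtoC_minus; ring).
    C_eq. rewrite RtoC_minus; ring.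
  - etransitivity;
      [apply (RInt_comp_lin (V:=C_R_CompleteNormedModule) (fun s => (G (p + RtoC s * d) * d)%C))|];
      replace ((b - a) * 0 + a) with a by ring; replace ((b - a) * 1 + a) with b by ring;
      [apply ex_RInt_line, Hc | reflexivity].
Qed.

Lemma between_01 (P : R -> Prop) (u v : R) :
  0 <= u <= 1 -> 0 <= v <= 1 -> (forall s, 0 <= s <= 1 -> P s) ->
  forall s, Rmin u v <= s <= Rmax u v -> P s.
Proof. intros Hu Hv H s Hs. apply H. unfold Rmin, Rmax in Hs. destruct (Rle_dec u v); lra. Qed.

Lemma seg_chasles (G : C -> C) (p d : C) (a b c : R) :
  0 <= a <= 1 -> 0 <= b <= 1 -> 0 <= c <= 1 ->
  (forall s, 0 <= s <= 1 -> ccontinuous_at G (p + RtoC s * d)%C) ->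
  (seg G (p + RtoC a * d) (p + RtoC b * d) + seg G (p + RtoC b * d) (p + RtoC c * d))%C
  = seg G (p + RtoC a * d) (p + RtoC c * d).
Proof.
  intros Ha Hb Hc H.
  rewrite !seg_line by (apply between_01; assumption).
  apply (RInt_Chasles (V:=C_R_CompleteNormedModule)); apply ex_RInt_line, between_01; assumption.
Qed.

Lemma seg_swap (G : C -> C) (p d : C) (a b : R) :
  0 <= a <= 1 -> 0 <= b <= 1 ->
  (forall s, 0 <= s <= 1 -> ccontinuous_at G (p + RtoC s * d)%C) ->
  seg G (p + RtoC b * d) (p + RtoC a * d) = (- seg G (p + RtoC a * d) (p + RtoC b * d))%C.
Proof.
  intros Ha Hb H.
  rewrite !seg_line by (apply between_01; assumption).
  rewrite <- (opp_RInt_swap (V:=C_R_CompleteNormedModule)); [reflexivity|].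
  apply ex_RInt_line, between_01; assumption.
Qed.

Lemma seg_rev (G : C -> C) (x y : C) :
  ccontinuous_on_seg G x y -> seg G y x = (- seg G x y)%C.
Proof.
  intros H.
  assert (E := seg_swap G x (y - x) 0 1 ltac:(lra) ltac:(lra) H).
  replace (x + RtoC 0 * (y - x))%C with x in E by ring.
  replace (x + RtoC 1 * (y - x))%C with y in E by ring.
  exact E.
Qed.

Definition mid (x y : C) : C := (x + RtoC (/2) * (y - x))%C.

Lemma seg_mid (G : C -> C) (x y : C) :
  ccontinuous_on_seg G x y -> seg G x y = (seg G x (mid x y) + seg G (mid x y) y)%C.
Proof.
  intros H.
  assert (E := seg_chasles G x (y - x) 0 (/2) 1 ltac:(lra) ltac:(lra) ltac:(lra) H).
  replace (x + RtoC 0 * (y - x))%C with x in E by ring.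
  replace (x + RtoC 1 * (y - x))%C with y in E by ring.
  rewrite <- E. reflexivity.
Qed.

Lemma seg_refl (G : C -> C) (x : C) : seg G x x = 0%C.
Proof.
  unfold seg. rewrite (RInt_ext (V:=C_R_CompleteNormedModule) _ (fun _ => RtoC 0)).
  - rewrite RInt_const, scal_C_R. C_eq. ring.
  - intros t _. unfold seg_integrand. C_eq. ring.
Qed.

Lemma seg_le (G : C -> C) (x y : C) (B : R) :
  ccontinuous_on_seg G x y ->
  (forall t, 0 <= t <= 1 -> Cmod (G (x + RtoC t * (y - x))%C) <= B) ->
  Cmod (seg G x y) <= Cmod (y - x) * B.
Proof.
  intros Hc HB. rewrite <- norm_C_R.
  apply (norm_RInt_le (V:=C_R_NormedModule) (seg_integrand G x y) (fun _ => Cmod (y - x) * B) 0 1).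
  - lra.
  - intros t Ht. rewrite norm_C_R. unfold seg_integrand. rewrite Cmod_mult, Rmult_comm.
    apply Rmult_le_compat_l; [apply Cmod_ge_0 | apply HB; exact Ht].
  - apply (RInt_correct (V:=C_R_CompleteNormedModule)), ex_RInt_seg, Hc.
  - pose proof (is_RInt_const (V:=R_NormedModule) 0 1 (Cmod (y - x) * B)) as Hi.
    change (scal (1 - 0) (Cmod (y - x) * B)) with ((1 - 0) * (Cmod (y - x) * B)) in Hi.
    replace ((1 - 0) * (Cmod (y - x) * B)) with (Cmod (y - x) * B) in Hi by ring. exact Hi.
Qed.

Lemma seg_sub (G H : C -> C) (x y : C) :
  ccontinuous_on_seg G x y -> ccontinuous_on_seg H x y ->
  seg (fun w => G w - H w)%C x y = (seg G x y - seg H x y)%C.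
Proof.
  intros HG HH. unfold seg.
  rewrite <- (RInt_minus (V:=C_R_CompleteNormedModule)) by (apply ex_RInt_seg; assumption).
  apply (RInt_ext (V:=C_R_CompleteNormedModule)). intros t _. unfold seg_integrand.
  change (minus ?a ?b) with (a - b)%C. C_eq. ring.
Qed.

Lemma seg_const (c x y : C) : seg (fun _ => c) x y = (c * (y - x))%C.
Proof.
  unfold seg, seg_integrand. rewrite RInt_const, scal_C_R. C_eq. rewrite RtoC_minus. ring.
Qed.

Lemma is_RInt_id_scal (K : C) :
  is_RInt (V:=C_R_CompleteNormedModule) (fun t => (RtoC t * K)%C) 0 1 (RtoC (/2) * K)%C.
Proof.
  assert (H : is_RInt (V:=C_R_CompleteNormedModule)
     (fun t : R => plus (scal t K) (scal (t * t / 2) (RtoC 0))) 0 1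
     (minus (scal (1 * 1 / 2) K) (scal (0 * 0 / 2) K))).
  { apply (is_RInt_scal_derive (V:=C_R_CompleteNormedModule) (fun t => t * t / 2) (fun _ => K)
             (fun t => t) (fun _ => RtoC 0)).
    - intros t _. apply (is_derive_ext (fun t => t * t / 2)); [reflexivity|].
      auto_derive; [exact I | field].
    - intros t _. apply (is_derive_const (V:=C_R_NormedModule)).
    - intros t _. apply continuous_id.
    - intros t _. apply continuous_const. }
  destruct K as [k1 k2].
  eapply is_RInt_ext; [| replace (RtoC (/ 2) * (k1, k2))%C with
     (minus (scal (1 * 1 / 2) (k1, k2)) (scal (0 * 0 / 2) (k1, k2))); [exact H|]].
  - intros t _. apply injective_projections; simpl;
      unfold plus, scal, mult, opp; simpl; unfold plus, scal, mult, opp; simpl; field.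
  - apply injective_projections; simpl;
      unfold minus, plus, scal, mult, opp; simpl; unfold plus, scal, mult, opp; simpl; field.
Qed.

Lemma seg_affine (c l q x y : C) :
  seg (fun w => c + l * (w - q))%C x y
  = (c * (y - x) + l * ((y - q) * (y - q) - (x - q) * (x - q)) * RtoC (/2))%C.
Proof.
  unfold seg. apply (is_RInt_unique (V:=C_R_CompleteNormedModule)).
  set (K0 := ((c + l * (x - q)) * (y - x))%C). set (K1 := (l * (y - x) * (y - x))%C).
  assert (H := is_RInt_plus (V:=C_R_CompleteNormedModule) _ _ 0 1 _ _
     (is_RInt_const (V:=C_R_CompleteNormedModule) 0 1 K0) (is_RInt_id_scal K1)).
  eapply is_RInt_ext; [| replace (c * (y - x) + l * ((y - q) * (y - q) - (x - q) * (x - q)) * RtoC (/2))%C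
     with (plus (scal (1 - 0) K0) (RtoC (/ 2) * K1)%C); [exact H|]].
  - intros t _. unfold seg_integrand, K0, K1. change (plus ?a ?b) with (a + b)%C. C_eq. ring.
  - change (plus ?a ?b) with (a + b)%C. rewrite scal_C_R. unfold K0, K1. C_eq.
    rewrite RtoC_inv by lra. rewrite RtoC_minus. field.
Qed.

(** * Goursat's theorem *)

Record triangle := Triangle { tA : C; tB : C; tC : C }.

Definition contour (G : C -> C) (T : triangle) : C :=
  (seg G (tA T) (tB T) + seg G (tB T) (tC T) + seg G (tC T) (tA T))%C.

Definition perimeter (T : triangle) : R :=
  Cmod (tB T - tA T) + Cmod (tC T - tB T) + Cmod (tA T - tC T).

Definition triangle_in (K : C -> Prop) (T : triangle) : Prop :=
  K (tA T) /\ K (tB T) /\ K (tC T).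

Lemma perimeter_ge_0 (T : triangle) : 0 <= perimeter T.
Proof.
  unfold perimeter.
  generalize (Cmod_ge_0 (tB T - tA T)) (Cmod_ge_0 (tC T - tB T)) (Cmod_ge_0 (tA T - tC T)). lra.
Qed.

Lemma ccontinuous_on_edges (K : C -> Prop) (G : C -> C) (T : triangle) :
  is_convex K -> (forall w, K w -> ccontinuous_at G w) -> triangle_in K T ->
  ccontinuous_on_seg G (tA T) (tB T) /\ ccontinuous_on_seg G (tB T) (tC T) /\
  ccontinuous_on_seg G (tC T) (tA T).
Proof.
  intros HK HG [Ha [Hb Hc]].
  repeat split; apply (ccontinuous_on_seg_convex G K); assumption.
Qed.

Lemma triangle_in_cball_perimeter (T : triangle) :
  triangle_in (fun w => Cmod (w - tA T) <= perimeter T) T.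
Proof.
  generalize (perimeter_ge_0 T). unfold perimeter.
  generalize (Cmod_ge_0 (tB T - tA T)) (Cmod_ge_0 (tC T - tB T)) (Cmod_ge_0 (tA T - tC T)).
  repeat split.
  - replace (tA T - tA T)%C with (RtoC 0) by ring. rewrite Cmod_0. lra.
  - lra.
  - rewrite Cmod_sub_sym. lra.
Qed.

Lemma contour_sub (G H : C -> C) (K : C -> Prop) (T : triangle) :
  is_convex K -> (forall w, K w -> ccontinuous_at G w) -> (forall w, K w -> ccontinuous_at H w) ->
  triangle_in K T -> contour (fun w => G w - H w)%C T = (contour G T - contour H T)%C.
Proof.
  intros HK HG HH HT.
  destruct (ccontinuous_on_edges K G T HK HG HT) as [G1 [G2 G3]].
  destruct (ccontinuous_on_edges K H T HK HH HT) as [H1 [H2 H3]].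
  unfold contour. rewrite !seg_sub by assumption. ring.
Qed.

Lemma contour_affine (c l q : C) (T : triangle) : contour (fun w => c + l * (w - q))%C T = 0%C.
Proof. unfold contour. rewrite !seg_affine. ring. Qed.

Lemma contour_le (G : C -> C) (K : C -> Prop) (M : R) (T : triangle) :
  is_convex K -> triangle_in K T ->
  (forall w, K w -> ccontinuous_at G w /\ Cmod (G w) <= M) ->
  Cmod (contour G T) <= perimeter T * M.
Proof.
  intros HK HT HG.
  assert (Hseg : forall x y, K x -> K y -> Cmod (seg G x y) <= Cmod (y - x) * M).
  { intros x y Hx Hy. apply seg_le.
    - apply (ccontinuous_on_seg_convex G K); auto. intros w Hw. apply HG, Hw.
    - intros t Ht. apply HG, HK; assumption. }
  destruct HT as [Ha [Hb Hc]].
  unfold contour, perimeter.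
  eapply Rle_trans; [apply Cmod_triangle|].
  eapply Rle_trans; [apply Rplus_le_compat_r, Cmod_triangle|].
  generalize (Hseg _ _ Ha Hb) (Hseg _ _ Hb Hc) (Hseg _ _ Hc Ha). lra.
Qed.

(* Affine functions have zero contour integral, so only the remainder of the
   linearisation of [G] at [q] is integrated. *)
Lemma contour_le_affine_approx (G : C -> C) (K : C -> Prop) (q l : C) (M : R) (T : triangle) :
  is_convex K -> triangle_in K T -> (forall w, K w -> ccontinuous_at G w) ->
  (forall w, K w -> Cmod (G w - G q - l * (w - q)) <= M) ->
  Cmod (contour G T) <= perimeter T * M.
Proof.
  intros HK HT HG HM.
  set (A := fun w => (G q + l * (w - q))%C).
  assert (E : contour G T = contour (fun w => G w - A w)%C T).
  { rewrite (contour_sub G A K) by (auto; intros; apply ccontinuous_at_affine).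
    unfold A. rewrite contour_affine. C_eq. ring. }
  rewrite E. apply (contour_le _ K); auto.
  intros w Hw. split.
  - apply ccontinuous_at_sub; [auto | apply ccontinuous_at_affine].
  - unfold A. replace (G w - (G q + l * (w - q)))%C with (G w - G q - l * (w - q))%C by ring.
    auto.
Qed.

Definition subtri1 (T : triangle) : triangle := Triangle (tA T) (mid (tA T) (tB T)) (mid (tC T) (tA T)).
Definition subtri2 (T : triangle) : triangle := Triangle (mid (tA T) (tB T)) (tB T) (mid (tB T) (tC T)).
Definition subtri3 (T : triangle) : triangle := Triangle (mid (tC T) (tA T)) (mid (tB T) (tC T)) (tC T).
Definition subtri4 (T : triangle) : triangle :=
  Triangle (mid (tA T) (tB T)) (mid (tB T) (tC T)) (mid (tC T) (tA T)).

Definition is_subtri (U T : triangle) : Prop :=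
  U = subtri1 T \/ U = subtri2 T \/ U = subtri3 T \/ U = subtri4 T.

Lemma contour_subtri (G : C -> C) (K : C -> Prop) (T : triangle) :
  is_convex K -> (forall w, K w -> ccontinuous_at G w) -> triangle_in K T ->
  contour G T = (contour G (subtri1 T) + contour G (subtri2 T)
                 + contour G (subtri3 T) + contour G (subtri4 T))%C.
Proof.
  intros HK HG [Ha [Hb Hc]]. destruct T as [a b c]. simpl in *.
  assert (Hm : forall x y, K x -> K y -> K (mid x y)) by (intros; apply HK; auto; lra).
  assert (Hs : forall x y, K x -> K y -> ccontinuous_on_seg G x y)
    by (intros; apply (ccontinuous_on_seg_convex G K); auto).
  unfold contour, subtri1, subtri2, subtri3, subtri4; simpl.
  rewrite (seg_mid G a b), (seg_mid G b c), (seg_mid G c a) by auto.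
  rewrite (seg_rev G (mid c a) (mid a b)), (seg_rev G (mid a b) (mid b c)),
    (seg_rev G (mid b c) (mid c a)) by auto.
  ring.
Qed.

Lemma Cmod_half_sub (p q u v : C) :
  (p - q)%C = (RtoC (/2) * (u - v))%C -> Cmod (p - q) = Cmod (u - v) / 2.
Proof. intros ->. rewrite Cmod_scal by lra. field. Qed.

Lemma perimeter_subtri (U T : triangle) : is_subtri U T -> perimeter U = perimeter T / 2.
Proof.
  destruct T as [a b c].
  unfold perimeter, subtri1, subtri2, subtri3, subtri4.
  intros [-> | [-> | [-> | ->]]]; simpl.
  - rewrite (Cmod_half_sub (mid a b) a b a), (Cmod_half_sub (mid c a) (mid a b) c b),
      (Cmod_half_sub a (mid c a) a c) by (unfold mid; rewrite RtoC_inv by lra; field).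
    field.
  - rewrite (Cmod_half_sub b (mid a b) b a), (Cmod_half_sub (mid b c) b c b),
      (Cmod_half_sub (mid a b) (mid b c) a c) by (unfold mid; rewrite RtoC_inv by lra; field).
    field.
  - rewrite (Cmod_half_sub (mid b c) (mid c a) b a), (Cmod_half_sub c (mid b c) c b),
      (Cmod_half_sub (mid c a) c a c) by (unfold mid; rewrite RtoC_inv by lra; field).
    field.
  - rewrite (Cmod_half_sub (mid b c) (mid a b) c a), (Cmod_half_sub (mid c a) (mid b c) a b),
      (Cmod_half_sub (mid a b) (mid c a) b c) by (unfold mid; rewrite RtoC_inv by lra; field).
    rewrite (Cmod_sub_sym c a), (Cmod_sub_sym a b), (Cmod_sub_sym b c). field.
Qed.

Lemma triangle_in_subtri (K : C -> Prop) (U T : triangle) :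
  is_convex K -> triangle_in K T -> is_subtri U T -> triangle_in K U.
Proof.
  intros HK [Ha [Hb Hc]] HU.
  assert (Hm : forall x y, K x -> K y -> K (mid x y)) by (intros; apply HK; auto; lra).
  destruct HU as [-> | [-> | [-> | ->]]]; repeat split; simpl; auto.
Qed.

Lemma subtri_tA_near (U T : triangle) : is_subtri U T -> Cmod (tA U - tA T) <= perimeter T.
Proof.
  intros HU.
  apply (triangle_in_subtri _ U T (is_convex_cball _ _) (triangle_in_cball_perimeter T) HU).
Qed.

Definition goursat_step (G : C -> C) (T : triangle) : triangle :=
  let quarter := Cmod (contour G T) / 4 in
  if Rle_dec quarter (Cmod (contour G (subtri1 T))) then subtri1 T else
  if Rle_dec quarter (Cmod (contour G (subtri2 T))) then subtri2 T else
  if Rle_dec quarter (Cmod (contour G (subtri3 T))) then subtri3 T else subtri4 T.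

Lemma goursat_step_subtri (G : C -> C) (T : triangle) : is_subtri (goursat_step G T) T.
Proof. unfold goursat_step, is_subtri. repeat destruct Rle_dec; auto. Qed.

Lemma goursat_step_contour (G : C -> C) (T : triangle) :
  contour G T = (contour G (subtri1 T) + contour G (subtri2 T)
                 + contour G (subtri3 T) + contour G (subtri4 T))%C ->
  Cmod (contour G T) / 4 <= Cmod (contour G (goursat_step G T)).
Proof.
  intros E. unfold goursat_step. repeat (destruct Rle_dec; [assumption|]).
  assert (Cmod (contour G T) <= Cmod (contour G (subtri1 T)) + Cmod (contour G (subtri2 T))
                                + Cmod (contour G (subtri3 T)) + Cmod (contour G (subtri4 T))).
  { rewrite E at 1. eapply Rle_trans; [apply Cmod_triangle|].
    apply Rplus_le_compat_r. eapply Rle_trans; [apply Cmod_triangle|].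
    apply Rplus_le_compat_r, Cmod_triangle. }
  lra.
Qed.

Fixpoint goursat_seq (G : C -> C) (T : triangle) (n : nat) : triangle :=
  match n with O => T | S n => goursat_step G (goursat_seq G T n) end.

Lemma pow_half_bounds (n : nat) : 0 < (/2)^n <= 1.
Proof. induction n; simpl; lra. Qed.

Lemma pow_half_small (c eps : R) : 0 < eps -> exists N, c * (/2)^N < eps.
Proof.
  intros He.
  assert (Hc : 0 < Rabs c + 1) by (generalize (Rabs_pos c); lra).
  destruct (pow_lt_1_zero (/2) ltac:(rewrite Rabs_pos_eq; lra) (eps / (Rabs c + 1)))
    as [N HN]; [apply Rdiv_lt_0_compat; lra|].
  exists N. specialize (HN N (le_n _)).
  destruct (pow_half_bounds N).
  rewrite Rabs_pos_eq in HN by lra.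
  apply Rle_lt_trans with ((Rabs c + 1) * (/2)^N).
  - apply Rmult_le_compat_r; [lra|]. generalize (Rle_abs c). lra.
  - apply Rlt_le_trans with ((Rabs c + 1) * (eps / (Rabs c + 1))).
    + apply Rmult_lt_compat_l; lra.
    + right; field; lra.
Qed.

Lemma pow_half_le (n m : nat) : (n <= m)%nat -> (/2)^m <= (/2)^n.
Proof.
  intros H. replace m with (n + (m - n))%nat by lia. rewrite pow_add.
  destruct (pow_half_bounds n), (pow_half_bounds (m - n)). nra.
Qed.

Lemma Un_cv_Rabs_le (u : nat -> R) (l c B : R) (n : nat) :
  Un_cv u l -> (forall m, (m >= n)%nat -> Rabs (u m - c) <= B) -> Rabs (l - c) <= B.
Proof.
  intros Hu Hb. destruct (Rle_dec (Rabs (l - c)) B) as [|Hn]; [assumption|].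
  destruct (Hu (Rabs (l - c) - B)) as [N HN]; [lra|].
  specialize (HN (Nat.max N n) (Nat.le_max_l _ _)).
  specialize (Hb (Nat.max N n) (Nat.le_max_r _ _)).
  unfold Rdist in HN.
  assert (Rabs (l - c) <= Rabs (u (Nat.max N n) - l) + Rabs (u (Nat.max N n) - c)).
  { replace (l - c) with (- (u (Nat.max N n) - l) + (u (Nat.max N n) - c)) by ring.
    eapply Rle_trans; [apply Rabs_triang|]. rewrite Rabs_Ropp. lra. }
  lra.
Qed.

Lemma Cmod_le_Rabs_Re_Im (z : C) : Cmod z <= Rabs (Re z) + Rabs (Im z).
Proof.
  destruct z as [x y]. unfold Cmod; simpl.
  rewrite <- (sqrt_Rsqr (Rabs x + Rabs y)) by (generalize (Rabs_pos x) (Rabs_pos y); lra).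
  apply sqrt_le_1_alt. unfold Rsqr.
  generalize (Rabs_pos x) (Rabs_pos y). intros.
  replace (x * (x * 1) + y * (y * 1)) with (Rabs x * Rabs x + Rabs y * Rabs y); [nra|].
  rewrite <- !Rabs_mult, !Rabs_pos_eq by nra. ring.
Qed.

Lemma im_le_Cmod (z : C) : Rabs (Im z) <= Cmod z.
Proof.
  destruct z as [x y]. unfold Cmod; simpl.
  rewrite <- sqrt_Rsqr_abs. apply sqrt_le_1_alt. unfold Rsqr. nra.
Qed.

Lemma geometric_cauchy_bound (a : nat -> C) (B : R) :
  (forall n, Cmod (a (S n) - a n) <= B * (/2)^n) ->
  forall n k, Cmod (a (n + k)%nat - a n) <= 2 * B * (/2)^n.
Proof.
  intros Ha n k.
  assert (Hk : Cmod (a (n + k)%nat - a n) <= 2 * B * ((/2)^n - (/2)^(n + k))).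
  { induction k as [|k IHk].
    - rewrite Nat.add_0_r. replace (a n - a n)%C with (RtoC 0) by ring. rewrite Cmod_0. lra.
    - rewrite Nat.add_succ_r.
      replace (a (S (n + k)) - a n)%C
        with ((a (S (n + k)) - a (n + k)%nat) + (a (n + k)%nat - a n))%C by ring.
      eapply Rle_trans; [apply Cmod_triangle|].
      generalize (Ha (n + k)%nat). simpl pow. lra. }
  assert (HB : 0 <= B) by (generalize (Ha O) (Cmod_ge_0 (a 1%nat - a O)%C); simpl; lra).
  destruct (pow_half_bounds (n + k)). nra.
Qed.

Lemma geometric_limit (a : nat -> C) (B : R) :
  (forall n, Cmod (a (S n) - a n) <= B * (/2)^n) ->
  exists q, forall n, Cmod (q - a n) <= 4 * B * (/2)^n.
Proof.
  intros Ha. assert (Hb := geometric_cauchy_bound a B Ha).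
  assert (HB : 0 <= B) by (generalize (Ha O) (Cmod_ge_0 (a 1%nat - a O)%C); simpl; lra).
  assert (Hd : forall f : C -> R, (forall z, Rabs (f z) <= Cmod z) ->
            (forall z w, f (z - w)%C = f z - f w) ->
            forall n m, (m >= n)%nat -> Rabs (f (a m) - f (a n)) <= 2 * B * (/2)^n).
  { intros f Hf Hl n m Hm. replace m with (n + (m - n))%nat by lia.
    rewrite <- Hl. eapply Rle_trans; [apply Hf | apply Hb]. }
  assert (Hc : forall f : C -> R, (forall z, Rabs (f z) <= Cmod z) ->
            (forall z w, f (z - w)%C = f z - f w) -> Cauchy_crit (fun n => f (a n))).
  { intros f Hf Hl eps He. destruct (pow_half_small (2 * B) eps He) as [N HN].
    assert (HN' : forall n, (n >= N)%nat -> 2 * B * (/2)^n < eps).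
    { intros n Hn. eapply Rle_lt_trans; [|exact HN].
      generalize (pow_half_bounds n) (pow_half_le N n Hn). nra. }
    exists N. intros n m Hn Hm. unfold Rdist.
    destruct (Nat.le_ge_cases n m) as [Hnm|Hnm].
    - rewrite Rabs_minus_sym. eapply Rle_lt_trans; [apply (Hd f Hf Hl n m); lia | apply HN'; lia].
    - eapply Rle_lt_trans; [apply (Hd f Hf Hl m n); lia | apply HN'; lia]. }
  assert (Hre : forall z w, Re (z - w)%C = Re z - Re w) by (intros [] []; simpl; ring).
  assert (Him : forall z w, Im (z - w)%C = Im z - Im w) by (intros [] []; simpl; ring).
  destruct (Rcomplete.R_complete _ (Hc Re re_le_Cmod Hre)) as [lx Hlx].
  destruct (Rcomplete.R_complete _ (Hc Im im_le_Cmod Him)) as [ly Hly].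
  exists (lx, ly). intros n.
  eapply Rle_trans; [apply Cmod_le_Rabs_Re_Im|].
  assert (Rabs (Re ((lx, ly) - a n)%C) <= 2 * B * (/2)^n).
  { rewrite Hre. apply (Un_cv_Rabs_le _ _ _ _ n Hlx). intros m Hm. apply (Hd Re re_le_Cmod Hre); auto. }
  assert (Rabs (Im ((lx, ly) - a n)%C) <= 2 * B * (/2)^n).
  { rewrite Him. apply (Un_cv_Rabs_le _ _ _ _ n Hly). intros m Hm. apply (Hd Im im_le_Cmod Him); auto. }
  lra.
Qed.

Section Goursat.

Variables (G : C -> C) (K : C -> Prop).
Hypotheses (K_convex : is_convex K) (K_closed : is_closed K)
  (G_cderiv : forall w, K w -> exists l, has_cderiv G w l).

Lemma ccontinuous_on_K (w : C) : K w -> ccontinuous_at G w.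
Proof. intros Hw. destruct (G_cderiv w Hw) as [l Hl]. exact (has_cderiv_continuous G w l Hl). Qed.

Lemma goursat_seq_spec (T : triangle) : triangle_in K T -> forall n,
  triangle_in K (goursat_seq G T n) /\
  perimeter (goursat_seq G T n) = perimeter T * (/2)^n /\
  Cmod (contour G T) * (/4)^n <= Cmod (contour G (goursat_seq G T n)).
Proof.
  intros HT n. induction n as [|n [Hin [Hper Hcon]]]; simpl.
  - repeat split; try apply HT; lra.
  - assert (Hsub := goursat_step_subtri G (goursat_seq G T n)).
    split; [|split].
    + apply (triangle_in_subtri K _ (goursat_seq G T n)); assumption.
    + rewrite (perimeter_subtri _ _ Hsub), Hper. field.
    + assert (Hq := goursat_step_contour G (goursat_seq G T n)
                      (contour_subtri G K _ K_convex ccontinuous_on_K Hin)).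
      replace (Cmod (contour G T) * (/ 4 * (/ 4) ^ n))
        with (Cmod (contour G T) * (/ 4) ^ n / 4) by field.
      lra.
Qed.

Lemma goursat_seq_limit (T : triangle) : triangle_in K T ->
  exists q, K q /\ forall n, Cmod (q - tA (goursat_seq G T n)) <= 4 * perimeter T * (/2)^n.
Proof.
  intros HT.
  destruct (geometric_limit (fun n => tA (goursat_seq G T n)) (perimeter T)) as [q Hq].
  { intros n. destruct (goursat_seq_spec T HT n) as [_ [Hper _]].
    rewrite <- Hper. apply subtri_tA_near, goursat_step_subtri. }
  exists q. split; [|exact Hq].
  apply K_closed. intros eps He.
  destruct (pow_half_small (4 * perimeter T) eps He) as [N HN].
  exists (tA (goursat_seq G T N)). split.
  - apply (goursat_seq_spec T HT N).
  - rewrite Cmod_sub_sym. generalize (Hq N). lra.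
Qed.

Theorem goursat (T : triangle) : triangle_in K T -> contour G T = 0%C.
Proof.
  intros HT. apply Cmod_eq_0, Rle_antisym; [|apply Cmod_ge_0].
  set (P := perimeter T). assert (HP := perimeter_ge_0 T).
  destruct (goursat_seq_limit T HT) as [q [Kq Hq]]. fold P in Hq.
  destruct (G_cderiv q Kq) as [l Hl].
  apply (le_0_of_le_small _ (5 * P * P) 1); [lra|]. intros eps [He _].
  destruct (Hl eps He) as [del [Hdel Hd]].
  destruct (pow_half_small (5 * P) del Hdel) as [N HN].
  set (U := goursat_seq G T N). set (rho := 5 * P * (/2)^N).
  destruct (goursat_seq_spec T HT N) as [HU [HperU HconU]]. fold U P in HU, HperU, HconU.
  assert (HUq : triangle_in (fun w => K w /\ Cmod (w - q) <= rho) U).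
  { assert (Hnear := triangle_in_cball_perimeter U).
    destruct HU as [Ha [Hb Hc]], Hnear as [Na [Nb Nc]].
    assert (Hv : forall v, Cmod (v - tA U) <= perimeter U -> Cmod (v - q) <= rho).
    { intros v Hv. replace (v - q)%C with ((v - tA U) + - (q - tA U))%C by ring.
      eapply Rle_trans; [apply Cmod_triangle|]. rewrite Cmod_opp.
      generalize (Hq N). fold U. unfold rho. lra. }
    repeat split; auto. }
  assert (Hbound := contour_le_affine_approx G (fun w => K w /\ Cmod (w - q) <= rho) q l (eps * rho) U
    (is_convex_and _ _ K_convex (is_convex_cball q rho)) HUq
    (fun w Hw => ccontinuous_on_K w (proj1 Hw))).
  assert (Hest : Cmod (contour G U) <= perimeter U * (eps * rho)).
  { apply Hbound. intros w [_ Hw]. eapply Rle_trans; [apply Hd; unfold rho in Hw; lra|].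
    apply Rmult_le_compat_l; lra. }
  rewrite HperU in Hest. unfold rho in Hest.
  replace ((/4)^N) with ((/2)^N * (/2)^N) in HconU
    by (rewrite <- Rpow_mult_distr; f_equal; field).
  destruct (pow_half_bounds N).
  apply (Rmult_le_reg_r ((/2)^N * (/2)^N)); [nra|].
  eapply Rle_trans; [exact HconU|]. eapply Rle_trans; [exact Hest|]. right; ring.
Qed.

End Goursat.

(** * Radial primitives on the unit disc *)

Lemma Re_scal_mul (e : R) (x k : C) : Re (RtoC e * x * k)%C = e * Re (x * k).
Proof. destruct x, k; simpl; ring. Qed.

Section Primitive.

Variable G : C -> C.
Hypotheses (G_cont : forall w, Cmod w < 1 -> ccontinuous_at G w)
  (G_cderiv : forall w, Cmod w < 1 -> w <> 0%C -> exists l, has_cderiv G w l).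

Lemma ccontinuous_on_disc (r : R) (w : C) : r < 1 -> Cmod w <= r -> ccontinuous_at G w.
Proof. intros Hr Hw. apply G_cont. lra. Qed.

(* The triangles [e a, a, b] and [e a, b, e b] filling the gap lie in the closed
   convex slice [Re (w * conj a) >= e * mu] of the disc, which avoids 0, so Goursat
   applies to them. *)
Lemma contour_origin_shrink (r e : R) (a b : C) :
  r < 1 -> Cmod a <= r -> Cmod b <= r -> 0 < Re (b * Cconj a) -> 0 < e <= 1 ->
  contour G (Triangle 0 a b) = contour G (Triangle 0 (RtoC e * a) (RtoC e * b)).
Proof.
  intros Hr Ha Hb Hba He.
  assert (Haa : 0 < Re (a * Cconj a)).
  { destruct a as [a1 a2]. simpl in *.
    destruct (Req_dec a1 0), (Req_dec a2 0); subst; [lra | nra | nra | nra]. }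
  set (mu := Rmin (Re (a * Cconj a)) (Re (b * Cconj a))).
  assert (Hmu : 0 < mu) by (apply Rmin_pos; assumption).
  set (K := fun w => Cmod w <= r /\ e * mu <= Re (w * Cconj a)).
  assert (HK : forall x, Cmod x <= r -> mu <= Re (x * Cconj a) -> K x /\ K (RtoC e * x)%C).
  { intros x Hx Hmx. assert (0 <= Cmod x) by apply Cmod_ge_0.
    unfold K. rewrite Cmod_scal, Re_scal_mul by lra. repeat split; nra. }
  destruct (HK a Ha (Rmin_l _ _)) as [Ka Kea], (HK b Hb (Rmin_r _ _)) as [Kb Keb].
  assert (Hgoursat : forall T, triangle_in K T -> contour G T = 0%C).
  { apply goursat.
    - apply is_convex_and; [apply is_convex_disc | apply is_convex_half_plane].
    - apply is_closed_and; [apply is_closed_disc | apply is_closed_half_plane].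
    - intros w [Hw Hm]. apply G_cderiv; [lra|].
      intros ->. rewrite Cmult_0_l in Hm. simpl in Hm. nra. }
  assert (Z1 := Hgoursat (Triangle (RtoC e * a) a b) (conj Kea (conj Ka Kb))).
  assert (Z2 := Hgoursat (Triangle (RtoC e * a) b (RtoC e * b)) (conj Kea (conj Kb Keb))).
  assert (Hray : forall d, Cmod d <= r -> forall s, 0 <= s <= 1 -> ccontinuous_at G (0 + RtoC s * d)%C).
  { intros d Hd s Hs. apply (ccontinuous_on_disc r); [lra|].
    rewrite Cplus_0_l, Cmod_scal by lra. generalize (Cmod_ge_0 d). nra. }
  assert (Hseg : forall x y, K x -> K y -> ccontinuous_on_seg G x y).
  { intros x y [Hx _] [Hy _]. apply (ccontinuous_on_seg_convex G (fun w => Cmod w <= r));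
      auto using is_convex_disc. intros w Hw. apply (ccontinuous_on_disc r); assumption. }
  assert (C1 := seg_chasles G 0 a 0 e 1 ltac:(lra) ltac:(lra) ltac:(lra) (Hray a Ha)).
  assert (C2 := seg_chasles G 0 b 1 e 0 ltac:(lra) ltac:(lra) ltac:(lra) (Hray b Hb)).
  rewrite !Cplus_0_l, !Cmult_0_l, !Cmult_1_l in C1, C2.
  unfold contour in *; simpl in *.
  rewrite <- C1, <- C2.
  transitivity ((seg G 0 (RtoC e * a) + seg G (RtoC e * a) (RtoC e * b) + seg G (RtoC e * b) 0)
    + (seg G (RtoC e * a) a + seg G a b + seg G b (RtoC e * a))
    + (seg G (RtoC e * a) b + seg G b (RtoC e * b) + seg G (RtoC e * b) (RtoC e * a)))%C.
  - rewrite (seg_rev G (RtoC e * a) b), (seg_rev G (RtoC e * a) (RtoC e * b)) by auto. ring.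
  - rewrite Z1, Z2. ring.
Qed.

Lemma contour_origin_small (r e d0 : R) (a b : C) :
  (forall v, Cmod (v - 0) < d0 -> Cmod (G v - G 0%C) < 1) ->
  r < 1 -> Cmod a <= r -> Cmod b <= r -> 0 < e <= 1 -> e < d0 ->
  Cmod (contour G (Triangle 0 (RtoC e * a) (RtoC e * b)))
  <= e * (perimeter (Triangle 0 a b) * (Cmod (G 0%C) + 1)).
Proof.
  intros Hd0 Hr Ha Hb He Hed.
  assert (Hr0 : 0 <= r) by (generalize (Cmod_ge_0 a); lra).
  replace (e * (perimeter (Triangle 0 a b) * (Cmod (G 0%C) + 1)))
    with (perimeter (Triangle 0 (RtoC e * a) (RtoC e * b)) * (Cmod (G 0%C) + 1)).
  - apply (contour_le G (fun w => Cmod w <= e * r)); [apply is_convex_disc| |].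
    + generalize (Cmod_ge_0 a) (Cmod_ge_0 b). intros.
      repeat split; simpl; rewrite ?Cmod_0, ?Cmod_scal; nra.
    + intros w Hw. split; [apply (ccontinuous_on_disc r); nra|].
      replace (G w) with ((G w - G 0%C) + G 0%C)%C by ring.
      eapply Rle_trans; [apply Cmod_triangle|].
      assert (Cmod (G w - G 0%C) < 1) by (apply Hd0; replace (w - 0)%C with w by ring; nra). lra.
  - unfold perimeter; simpl.
    replace (RtoC e * a - 0)%C with (RtoC e * (a - 0))%C by ring.
    replace (RtoC e * b - RtoC e * a)%C with (RtoC e * (b - a))%C by ring.
    replace (0 - RtoC e * b)%C with (RtoC e * (0 - b))%C by ring.
    rewrite !Cmod_scal by lra. ring.
Qed.

Theorem contour_origin (r : R) (a b : C) :
  r < 1 -> Cmod a <= r -> Cmod b <= r -> 0 < Re (b * Cconj a) ->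
  contour G (Triangle 0 a b) = 0%C.
Proof.
  intros Hr Ha Hb Hba.
  destruct (G_cont 0%C ltac:(rewrite Cmod_0; lra) 1 ltac:(lra)) as [d0 [Hd0 Hc0]].
  apply Cmod_eq_0, Rle_antisym; [|apply Cmod_ge_0].
  apply (le_0_of_le_small _ (perimeter (Triangle 0 a b) * (Cmod (G 0%C) + 1)) (Rmin 1 d0));
    [apply Rmin_pos; lra|].
  intros e [He Hed].
  rewrite (contour_origin_shrink r e a b) by (auto; generalize (Rmin_l 1 d0); lra).
  apply (contour_origin_small r e d0); auto.
  - generalize (Rmin_l 1 d0). lra.
  - generalize (Rmin_r 1 d0). lra.
Qed.

Lemma contour_origin_near (z0 : C) : Cmod z0 < 1 ->
  exists d, 0 < d /\ forall w, Cmod (w - z0) < d ->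
    Cmod w <= (1 + Cmod z0) / 2 /\ contour G (Triangle 0 z0 w) = 0%C.
Proof.
  intros Hz0. destruct (Ceq_dec z0 0%C) as [-> | Hne].
  - rewrite Cmod_0. exists (1 / 2). split; [lra|]. intros w Hw.
    replace (w - 0)%C with w in Hw by ring. split; [lra|].
    assert (Hs : ccontinuous_on_seg G 0 w).
    { apply (ccontinuous_on_seg_convex G (fun v => Cmod v <= 1 / 2)); auto using is_convex_disc.
      - intros v Hv. apply (ccontinuous_on_disc (1 / 2)); [lra | assumption].
      - rewrite Cmod_0. lra.
      - lra. }
    unfold contour; simpl. rewrite seg_refl, (seg_rev G 0 w Hs). ring.
  - set (r := (1 + Cmod z0) / 2). assert (Hr : r < 1) by (unfold r; lra).
    assert (Hp : 0 < Cmod z0) by (apply Cmod_gt_0; auto).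
    exists (Rmin ((1 - Cmod z0) / 2) (Cmod z0)). split; [apply Rmin_pos; lra|].
    intros w Hw.
    assert (Hw1 : Cmod (w - z0) < (1 - Cmod z0) / 2) by (eapply Rlt_le_trans; [exact Hw | apply Rmin_l]).
    assert (Hw2 : Cmod (w - z0) < Cmod z0) by (eapply Rlt_le_trans; [exact Hw | apply Rmin_r]).
    assert (Hwr : Cmod w <= r).
    { replace w with (z0 + (w - z0))%C by ring.
      eapply Rle_trans; [apply Cmod_triangle|]. unfold r. lra. }
    split; [exact Hwr|].
    apply (contour_origin r); auto; [unfold r; lra|].
    assert (E : Re (w * Cconj z0)%C = Cmod z0 ^ 2 + Re ((w - z0) * Cconj z0)%C).
    { rewrite Cmod2_alt. destruct w, z0; simpl; ring. }
    assert (E2 := re_le_Cmod ((w - z0) * Cconj z0)%C). rewrite Cmod_mult, Cmod_conj in E2.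
    assert (Cmod (w - z0) * Cmod z0 < Cmod z0 * Cmod z0) by (apply Rmult_lt_compat_r; auto).
    generalize (Rle_abs (- Re ((w - z0) * Cconj z0)%C)). rewrite Rabs_Ropp. intros.
    rewrite E. replace (Cmod z0 ^ 2) with (Cmod z0 * Cmod z0) by ring. lra.
Qed.

(* The contour integral over [0, z0, w] vanishes, so the increment of the primitive
   is the integral of [G - G z0] over [z0, w]. *)
Theorem seg_primitive_cderiv (z0 : C) : Cmod z0 < 1 -> has_cderiv (fun z => seg G 0 z) z0 (G z0).
Proof.
  intros Hz0.
  destruct (contour_origin_near z0 Hz0) as [d2 [Hd2 Hnear]].
  set (r := (1 + Cmod z0) / 2) in Hnear.
  assert (Hr : r < 1) by (unfold r; lra).
  assert (Hdisc : forall x y, Cmod x <= r -> Cmod y <= r -> ccontinuous_on_seg G x y).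
  { intros x y Hx Hy. apply (ccontinuous_on_seg_convex G (fun v => Cmod v <= r));
      auto using is_convex_disc. intros v Hv. apply (ccontinuous_on_disc r); assumption. }
  assert (H0r : Cmod 0%C <= r) by (rewrite Cmod_0; unfold r; generalize (Cmod_ge_0 z0); lra).
  assert (Hz0r : Cmod z0 <= r) by (unfold r; lra).
  intros eps He.
  destruct (G_cont z0 Hz0 eps He) as [d1 [Hd1 Hc1]].
  exists (Rmin d1 d2). split; [apply Rmin_pos; auto|].
  intros w Hw.
  assert (Hw1 : Cmod (w - z0) < d1) by (eapply Rlt_le_trans; [exact Hw | apply Rmin_l]).
  destruct (Hnear w ltac:(eapply Rlt_le_trans; [exact Hw | apply Rmin_r])) as [Hwr Ht].
  unfold contour in Ht; simpl in Ht. rewrite (seg_rev G 0 w) in Ht by auto.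
  assert (E : (seg G 0 w - seg G 0 z0 - G z0 * (w - z0))%C = seg (fun v => G v - G z0)%C z0 w).
  { rewrite seg_sub, seg_const
      by first [apply Hdisc; assumption | intros ? _; apply ccontinuous_at_const].
    transitivity (seg G z0 w - G z0 * (w - z0) - (seg G 0 z0 + seg G z0 w + - seg G 0 w))%C.
    - C_eq. ring.
    - rewrite Ht. C_eq. ring. }
  rewrite E, Rmult_comm.
  apply seg_le.
  - intros t Ht'. apply ccontinuous_at_sub; [apply Hdisc; auto | apply ccontinuous_at_const].
  - intros t Ht'. apply Rlt_le, Hc1.
    replace (z0 + RtoC t * (w - z0) - z0)%C with (RtoC t * (w - z0))%C by ring.
    rewrite Cmod_scal by lra. generalize (Cmod_ge_0 (w - z0)). nra.
Qed.

End Primitive.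

(** * The Alexander operator on Bloch spaces *)

Lemma has_cderiv_analytic (f : C -> C) (z : C) :
  analytic_on_disc f -> Cmod z < 1 -> has_cderiv f z (cderiv f z).
Proof. intros Hf Hz. apply cderivP, Hf, Hz. Qed.

(* The continuous extension of [w |-> f w / w] across 0 when [f 0 = 0]. *)
Definition divz (f : C -> C) (w : C) : C :=
  if Ceq_dec w 0%C then cderiv f 0%C else (f w / w)%C.

Lemma has_cderiv_divz (f : C -> C) (w : C) :
  analytic_on_disc f -> Cmod w < 1 -> w <> 0%C -> exists l, has_cderiv (divz f) w l.
Proof.
  intros Hf Hw Hw0. eexists.
  apply (has_cderiv_ext_loc (fun v => f v * / v)%C _ _ _ (Cmod w)).
  - apply Cmod_gt_0, Hw0.
  - intros v Hv. unfold divz. destruct (Ceq_dec v 0%C) as [-> | _]; [|reflexivity].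
    rewrite Cmod_sub_sym in Hv. replace (w - 0)%C with w in Hv by ring. lra.
  - apply has_cderiv_mul; [apply has_cderiv_analytic | apply has_cderiv_inv]; assumption.
Qed.

Lemma ccontinuous_divz (f : C -> C) (w : C) :
  analytic_on_disc f -> f 0%C = 0%C -> Cmod w < 1 -> ccontinuous_at (divz f) w.
Proof.
  intros Hf Hf0 Hw. destruct (Ceq_dec w 0%C) as [-> | Hne].
  - intros eps He.
    destruct (has_cderiv_analytic f 0%C Hf Hw (eps / 2) ltac:(lra)) as [d [Hd B]].
    exists d. split; [exact Hd|]. intros v Hv.
    unfold divz. destruct (Ceq_dec 0%C 0%C) as [_ | N]; [|contradiction].
    destruct (Ceq_dec v 0%C) as [_ | Hv0].
    + replace (cderiv f 0%C - cderiv f 0%C)%C with (RtoC 0) by ring. rewrite Cmod_0. lra.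
    + specialize (B v Hv). rewrite Hf0 in B. replace (v - 0)%C with v in B by ring.
      assert (Hp : 0 < Cmod v) by (apply Cmod_gt_0, Hv0).
      replace (f v / v - cderiv f 0%C)%C with ((f v - 0 - cderiv f 0%C * v) / v)%C by (field; auto).
      rewrite Cmod_div by exact Hv0.
      apply (Rmult_lt_reg_r (Cmod v)); [exact Hp|].
      unfold Rdiv. rewrite Rmult_assoc, Rinv_l, Rmult_1_r by lra. nra.
  - destruct (has_cderiv_divz f w Hf Hw Hne) as [l Hl]. exact (has_cderiv_continuous _ _ _ Hl).
Qed.

Lemma Alexander_integrand_seg (f : C -> C) (z : C) (t : R) : 0 < t ->
  (f (RtoC t * z) / (RtoC t * z) * z)%C = seg_integrand (divz f) 0 z t.
Proof.
  intros Ht. unfold seg_integrand, divz.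
  replace (0 + RtoC t * (z - 0))%C with (RtoC t * z)%C by ring.
  destruct (Ceq_dec (RtoC t * z)%C 0%C) as [E|E].
  - assert (Hz : z = 0%C).
    { apply Cmod_eq_0. apply (f_equal Cmod) in E. rewrite Cmod_scal, Cmod_0 in E by lra. nra. }
    subst z. ring.
  - ring.
Qed.

Lemma Alexander_seg (f : C -> C) : Alexander f = (fun z => seg (divz f) 0 z).
Proof.
  apply functional_extensionality. intros z. unfold Alexander, seg.
  apply (RInt_ext (V:=C_R_CompleteNormedModule)). intros t Ht.
  rewrite Rmin_left, Rmax_right in Ht by lra.
  apply Alexander_integrand_seg. lra.
Qed.

Lemma Alexander_0 (f : C -> C) : Alexander f 0%C = 0%C.
Proof. rewrite Alexander_seg. apply seg_refl. Qed.

Lemma Alexander_cderiv (f : C -> C) (z : C) :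
  analytic_on_disc f -> f 0%C = 0%C -> Cmod z < 1 -> has_cderiv (Alexander f) z (divz f z).
Proof.
  intros Hf Hf0 Hz. rewrite Alexander_seg.
  apply seg_primitive_cderiv; [|intros w Hw Hw0; apply has_cderiv_divz| ]; auto.
  intros w Hw. apply ccontinuous_divz; auto.
Qed.

Lemma is_RInt_Alexander (f : C -> C) (z : C) :
  analytic_on_disc f -> f 0%C = 0%C -> Cmod z < 1 ->
  is_RInt (V:=C_R_CompleteNormedModule)
    (fun t => (f (RtoC t * z) / (RtoC t * z) * z)%C) 0 1 (Alexander f z).
Proof.
  intros Hf Hf0 Hz. apply (RInt_correct (V:=C_R_CompleteNormedModule)).
  apply (ex_RInt_ext (seg_integrand (divz f) 0 z)).
  - intros t Ht. rewrite Rmin_left, Rmax_right in Ht by lra.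
    symmetry. apply Alexander_integrand_seg. lra.
  - apply ex_RInt_seg, (ccontinuous_on_seg_convex _ (fun w => Cmod w <= Cmod z));
      auto using is_convex_disc; [|rewrite Cmod_0; apply Cmod_ge_0 | lra].
    intros w Hw. apply ccontinuous_divz; auto. lra.
Qed.

Lemma is_RInt_Cmult (g : R -> C) (a b : R) (I c : C) :
  is_RInt (V:=C_R_CompleteNormedModule) g a b I ->
  is_RInt (V:=C_R_CompleteNormedModule) (fun t => (c * g t)%C) a b (c * I)%C.
Proof.
  intros H.
  assert (H1 := is_RInt_fct_extend_fst (U:=R_NormedModule) (V:=R_NormedModule) g a b I H).
  assert (H2 := is_RInt_fct_extend_snd (U:=R_NormedModule) (V:=R_NormedModule) g a b I H).
  destruct c as [c1 c2].
  apply (is_RInt_fct_extend_pair (U:=R_NormedModule) (V:=R_NormedModule)); simpl.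
  - apply (is_RInt_minus (V:=R_NormedModule) (fun t => c1 * fst (g t)) (fun t => c2 * snd (g t)));
      apply (is_RInt_scal (V:=R_NormedModule)); assumption.
  - apply (is_RInt_plus (V:=R_NormedModule) (fun t => c1 * snd (g t)) (fun t => c2 * fst (g t)));
      apply (is_RInt_scal (V:=R_NormedModule)); assumption.
Qed.

Lemma Alexander_linear (f g : C -> C) (a b z : C) :
  analytic_on_disc f -> f 0%C = 0%C -> analytic_on_disc g -> g 0%C = 0%C -> Cmod z < 1 ->
  Alexander (fun w => a * f w + b * g w)%C z = (a * Alexander f z + b * Alexander g z)%C.
Proof.
  intros Hf Hf0 Hg Hg0 Hz.
  assert (H := is_RInt_plus (V:=C_R_CompleteNormedModule) _ _ 0 1 _ _
    (is_RInt_Cmult _ _ _ _ a (is_RInt_Alexander f z Hf Hf0 Hz))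
    (is_RInt_Cmult _ _ _ _ b (is_RInt_Alexander g z Hg Hg0 Hz))).
  unfold Alexander at 1. apply (is_RInt_unique (V:=C_R_CompleteNormedModule)).
  eapply is_RInt_ext; [|exact H].
  intros t _. change (plus ?x ?y) with (x + y)%C. C_eq. unfold Cdiv. ring.
Qed.

Lemma derivable_pt_lim_Re_line (f : C -> C) (u z d : C) (t : R) :
  has_cderiv f (RtoC t * z)%C d ->
  derivable_pt_lim (fun s => Re (u * f (RtoC s * z))%C) t (Re (u * d * z))%C.
Proof.
  intros Hc. set (psi := fun s => Re (u * f (RtoC s * z))%C). intros eps He.
  set (K := Cmod u * Cmod z + 1).
  assert (HK : 0 < K) by (unfold K; generalize (Cmod_ge_0 u) (Cmod_ge_0 z); nra).
  destruct (Hc (eps / (2 * K))) as [dc [Hdc Bc]]; [apply Rdiv_lt_0_compat; lra|].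
  assert (Hdp : 0 < dc / (Cmod z + 1)) by (apply Rdiv_lt_0_compat; generalize (Cmod_ge_0 z); lra).
  exists (mkposreal _ Hdp). intros h Hh0 Hh. simpl in Hh.
  assert (Hh' : 0 < Rabs h) by (apply Rabs_pos_lt; auto).
  set (w := (RtoC (t + h) * z)%C).
  assert (Ew : (w - RtoC t * z)%C = (RtoC h * z)%C) by (unfold w; rewrite RtoC_plus; ring).
  assert (Hwd : Cmod (w - RtoC t * z) < dc).
  { rewrite Ew, Cmod_mult, Cmod_R.
    assert (0 <= Cmod z) by apply Cmod_ge_0.
    apply Rle_lt_trans with (Rabs h * (Cmod z + 1)); [nra|].
    apply Rlt_le_trans with (dc / (Cmod z + 1) * (Cmod z + 1)); [apply Rmult_lt_compat_r; lra|].
    right; field; lra. }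
  specialize (Bc w Hwd). rewrite Ew, Cmod_mult, Cmod_R in Bc.
  assert (E : psi (t + h) - psi t - h * Re (u * d * z)%C
              = Re (u * (f w - f (RtoC t * z)%C - d * (RtoC h * z)))%C).
  { unfold psi. fold w. generalize (f w) (f (RtoC t * z)%C). intros A0 B0.
    destruct u, A0, B0, d, z; simpl; ring. }
  assert (Hreb : Rabs (psi (t + h) - psi t - h * Re (u * d * z)%C)
                 <= Cmod u * (eps / (2 * K) * (Rabs h * Cmod z))).
  { rewrite E. eapply Rle_trans; [apply re_le_Cmod|]. rewrite Cmod_mult.
    apply Rmult_le_compat_l; [apply Cmod_ge_0 | exact Bc]. }
  replace ((psi (t + h) - psi t) / h - Re (u * d * z)%C)
    with ((psi (t + h) - psi t - h * Re (u * d * z)%C) / h) by (field; auto).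
  unfold Rdiv. rewrite Rabs_mult, Rabs_inv.
  apply Rle_lt_trans with (Cmod u * (eps / (2 * K) * (Rabs h * Cmod z)) * / Rabs h).
  { apply Rmult_le_compat_r; [left; apply Rinv_0_lt_compat; auto | exact Hreb]. }
  replace (Cmod u * (eps / (2 * K) * (Rabs h * Cmod z)) * / Rabs h)
    with (eps / 2 * (Cmod u * Cmod z / K)) by (field; lra).
  assert (Cmod u * Cmod z / K < 1).
  { apply (Rmult_lt_reg_r K); auto. unfold Rdiv.
    rewrite Rmult_assoc, Rinv_l, Rmult_1_r by lra. unfold K; lra. }
  assert (0 <= Cmod u * Cmod z / K)
    by (apply Rdiv_le_0_compat; [apply Rmult_le_pos; apply Cmod_ge_0 | lra]).
  nra.
Qed.

(* Mean value theorem for the real function [t |-> Re (conj (f z - f 0) * f (t z))]. *)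
Lemma mean_value_ineq (f : C -> C) (z : C) (B : R) (D : R -> C) :
  (forall t, 0 <= t <= 1 -> has_cderiv f (RtoC t * z)%C (D t) /\ Cmod (D t) <= B) ->
  Cmod (f z - f 0%C) <= Cmod z * B.
Proof.
  intros HD.
  assert (HB : 0 <= B) by (destruct (HD 0 ltac:(lra)) as [_ H]; generalize (Cmod_ge_0 (D 0)); lra).
  set (u := Cconj (f z - f 0%C)).
  set (psi := fun t => Re (u * f (RtoC t * z))%C).
  destruct (MVT_gen psi 0 1 (fun t => Re (u * D t * z))%C) as [c [Hc Hmv]].
  - intros x Hx. rewrite Rmin_left, Rmax_right in Hx by lra.
    apply is_derive_Reals, derivable_pt_lim_Re_line, HD. lra.
  - intros x Hx. rewrite Rmin_left, Rmax_right in Hx by lra.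
    apply derivable_continuous_pt. exists (Re (u * D x * z))%C.
    apply derivable_pt_lim_Re_line, HD, Hx.
  - rewrite Rmin_left, Rmax_right in Hc by lra.
    unfold psi in Hmv. rewrite Cmult_1_l, Cmult_0_l, Rminus_0_r, Rmult_1_r in Hmv.
    assert (E1 : Re (u * f z)%C - Re (u * f 0%C)%C = Cmod (f z - f 0%C) ^ 2).
    { rewrite Cmod2_alt. unfold u. generalize (f z) (f 0%C). intros [] []. simpl. ring. }
    rewrite E1 in Hmv.
    assert (E2 := re_le_Cmod (u * D c * z)%C).
    rewrite !Cmod_mult in E2. unfold u in E2. rewrite Cmod_conj in E2.
    destruct (HD c Hc) as [_ HDc].
    set (X := Cmod (f z - f 0%C)) in *.
    assert (HX : 0 <= X) by apply Cmod_ge_0.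
    assert (Hz : 0 <= Cmod z) by apply Cmod_ge_0.
    assert (Hle : X * X <= X * (B * Cmod z)).
    { replace (X * X) with (X ^ 2) by ring. rewrite Hmv.
      eapply Rle_trans; [apply Rle_abs|]. eapply Rle_trans; [exact E2|].
      rewrite Rmult_assoc. apply Rmult_le_compat_l; [exact HX|].
      apply Rmult_le_compat_r; assumption. }
    destruct (Req_dec X 0) as [-> | HX0]; [nra|].
    apply (Rmult_le_reg_l X); [lra|]. lra.
Qed.

Lemma bloch_norm_spec (alpha : R) (f : C -> C) (M : R) :
  (forall z, in_disc z -> bloch_weight alpha f z <= M) ->
  (forall z, in_disc z -> bloch_weight alpha f z <= bloch_norm alpha f) /\ bloch_norm alpha f <= M.
Proof.
  intros HM. unfold bloch_norm.
  destruct (Lub_Rbar_correct (fun r => exists z, in_disc z /\ r = bloch_weight alpha f z))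
    as [Hub Hlub].
  assert (H0 : in_disc 0%C) by (unfold in_disc; rewrite Cmod_0; lra).
  assert (HlM := Hlub (Finite M) ltac:(intros x [z [Hz ->]]; simpl; apply HM; auto)).
  assert (Hx0 := Hub (bloch_weight alpha f 0%C) (ex_intro _ (RtoC 0) (conj H0 eq_refl))).
  destruct (Lub_Rbar _) as [v| |]; simpl in *; try contradiction.
  split; [|exact HlM].
  intros z Hz. apply (Hub (bloch_weight alpha f z) (ex_intro _ z (conj Hz eq_refl))).
Qed.

Lemma bloch_weight_le_norm (alpha : R) (f : C -> C) (z : C) :
  in_Bloch alpha f -> in_disc z -> bloch_weight alpha f z <= bloch_norm alpha f.
Proof. intros [_ [M HM]]. apply (bloch_norm_spec alpha f M HM). Qed.

Lemma disc_weight_anti (alpha : R) (v z : C) :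
  0 < alpha -> Cmod v <= Cmod z -> Cmod z < 1 ->
  Rpower (1 - Cmod z ^ 2) alpha <= Rpower (1 - Cmod v ^ 2) alpha.
Proof.
  intros Ha Hvz Hz. generalize (Cmod_ge_0 v). intros.
  apply Rle_Rpower_l; [lra|]. simpl. split; nra.
Qed.

(* Integrating [|f'(t z)| <= ||f|| / w(t z) <= ||f|| / w(z)] along the radius. *)
Lemma bloch_weight_Cmod_le (alpha : R) (f : C -> C) (z : C) :
  0 < alpha -> in_Bloch0 alpha f -> in_disc z ->
  Rpower (1 - Cmod z ^ 2) alpha * Cmod (f z) <= Cmod z * bloch_norm alpha f.
Proof.
  intros Ha [Hb Hf0] Hz.
  set (W := Rpower (1 - Cmod z ^ 2) alpha).
  assert (HW : 0 < W) by (unfold W, Rpower; apply exp_pos).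
  set (N := bloch_norm alpha f).
  assert (Hmv : Cmod (f z - f 0%C) <= Cmod z * (N / W)).
  { apply (mean_value_ineq f z (N / W) (fun t => cderiv f (RtoC t * z)%C)).
    intros t Ht.
    assert (Htz : Cmod (RtoC t * z)%C <= Cmod z)
      by (rewrite Cmod_scal by lra; generalize (Cmod_ge_0 z); nra).
    assert (Hd : in_disc (RtoC t * z)%C) by (unfold in_disc in *; lra).
    split; [apply has_cderiv_analytic; [apply Hb | exact Hd]|].
    assert (Hw := bloch_weight_le_norm alpha f _ Hb Hd). unfold bloch_weight in Hw.
    assert (Hmono := disc_weight_anti alpha _ _ Ha Htz Hz). fold W in Hmono.
    apply (Rmult_le_reg_l W); [exact HW|].
    replace (W * (N / W)) with N by (field; lra).
    eapply Rle_trans; [|exact Hw].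
    apply Rmult_le_compat_r; [apply Cmod_ge_0 | exact Hmono]. }
  rewrite Hf0 in Hmv. replace (f z - 0)%C with (f z) in Hmv by ring.
  apply (Rmult_le_compat_l W) in Hmv; [|lra].
  eapply Rle_trans; [exact Hmv|]. right. field. lra.
Qed.

Lemma Alexander_bloch_weight_le (alpha : R) (f : C -> C) (z : C) :
  0 < alpha -> in_Bloch0 alpha f -> in_disc z ->
  bloch_weight alpha (Alexander f) z <= bloch_norm alpha f.
Proof.
  intros Ha [[Hf HM] Hf0] Hz.
  unfold bloch_weight.
  rewrite (cderiv_eq _ _ _ (Alexander_cderiv f z Hf Hf0 Hz)).
  unfold divz. destruct (Ceq_dec z 0%C) as [-> | Hne].
  - apply (bloch_weight_le_norm alpha f 0%C (conj Hf HM) Hz).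
  - assert (Hzp : 0 < Cmod z) by (apply Cmod_gt_0, Hne).
    rewrite Cmod_div by exact Hne.
    assert (H := bloch_weight_Cmod_le alpha f z Ha (conj (conj Hf HM) Hf0) Hz).
    apply (Rmult_le_reg_r (Cmod z)); [exact Hzp|].
    replace (Rpower (1 - Cmod z ^ 2) alpha * (Cmod (f z) / Cmod z) * Cmod z)
      with (Rpower (1 - Cmod z ^ 2) alpha * Cmod (f z)) by (field; lra).
    lra.
Qed.

Lemma Alexander_id : Alexander (fun w => w) = (fun w => w).
Proof.
  apply functional_extensionality. intros z. unfold Alexander.
  rewrite (RInt_ext (V:=C_R_CompleteNormedModule) _ (fun _ => z)).
  - rewrite RInt_const, scal_C_R, RtoC_minus. C_eq. ring.
  - intros t Ht. rewrite Rmin_left, Rmax_right in Ht by lra.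
    destruct (Ceq_dec z 0%C) as [-> | Hz]; [C_eq; unfold Cdiv; ring|].
    C_eq. field. split; [exact Hz|]. intros E. apply RtoC_inj in E. lra.
Qed.

Lemma cderiv_id (z : C) : cderiv (fun w => w) z = 1%C.
Proof. apply cderiv_eq, has_cderiv_id. Qed.

Lemma bloch_weight_id (alpha : R) (z : C) :
  0 < alpha -> in_disc z -> bloch_weight alpha (fun w => w) z <= 1.
Proof.
  intros Ha Hz. unfold bloch_weight. rewrite cderiv_id, Cmod_1, Rmult_1_r.
  eapply Rle_trans; [apply (disc_weight_anti alpha 0%C z Ha); rewrite ?Cmod_0; auto using Cmod_ge_0|].
  rewrite Cmod_0. replace (1 - 0 ^ 2) with 1 by ring.
  unfold Rpower. rewrite ln_1, Rmult_0_r, exp_0. lra.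
Qed.

Lemma in_Bloch0_id (alpha : R) : 0 < alpha -> in_Bloch0 alpha (fun w => w).
Proof.
  intros Ha. split; [split|reflexivity].
  - intros z _. exists 1%C. apply cderivable_atE, has_cderiv_id.
  - exists 1. intros z Hz. apply bloch_weight_id; assumption.
Qed.

Lemma bloch_norm_id (alpha : R) : 0 < alpha -> bloch_norm alpha (fun w => w) = 1.
Proof.
  intros Ha.
  destruct (bloch_norm_spec alpha (fun w => w) 1 (fun z Hz => bloch_weight_id alpha z Ha Hz))
    as [Hup Hle].
  apply Rle_antisym; [exact Hle|].
  assert (H0 : in_disc 0%C) by (unfold in_disc; rewrite Cmod_0; lra).
  eapply Rle_trans; [|apply (Hup _ H0)].
  unfold bloch_weight. rewrite cderiv_id, Cmod_0, Cmod_1.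
  replace (1 - 0 ^ 2) with 1 by ring.
  unfold Rpower. rewrite ln_1, Rmult_0_r, exp_0. lra.
Qed.

Theorem theorem2p5 (alpha : R) (halpha : 0 < alpha) :
  (* C_0 maps B_alpha^0 into itself *)
  (forall f : C -> C, in_Bloch0 alpha f -> in_Bloch0 alpha (Alexander f)) /\
  (* C_0 is linear on B_alpha^0 (equality of functions on the disc) *)
  (forall (f g : C -> C) (a b : C), in_Bloch0 alpha f -> in_Bloch0 alpha g ->
     forall z : C, in_disc z ->
       Alexander (fun w => (a * f w + b * g w)%C) z
       = (a * Alexander f z + b * Alexander g z)%C) /\
  (* bounded with bound 1 *)
  (forall f : C -> C, in_Bloch0 alpha f ->
     bloch_norm alpha (Alexander f) <= bloch_norm alpha f) /\
  (* 1 is the least such bound, i.e. the operator norm equals 1 *)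
  (forall c : R,
     (forall f : C -> C, in_Bloch0 alpha f ->
        bloch_norm alpha (Alexander f) <= c * bloch_norm alpha f) ->
     1 <= c).
Proof.
  split; [|split; [|split]].
  - intros f Hb. pose proof Hb as [[Hf _] Hf0].
    split; [split|].
    + intros z Hz. exists (divz f z). apply cderivable_atE, Alexander_cderiv; assumption.
    + exists (bloch_norm alpha f). intros z Hz. apply Alexander_bloch_weight_le; assumption.
    + apply Alexander_0.
  - intros f g a b [[Hf _] Hf0] [[Hg _] Hg0] z Hz. apply Alexander_linear; assumption.
  - intros f Hb. apply (bloch_norm_spec alpha (Alexander f) (bloch_norm alpha f)).
    intros z Hz. apply Alexander_bloch_weight_le; assumption.
  - intros c Hc. specialize (Hc (fun w => w) (in_Bloch0_id alpha halpha)).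
    rewrite Alexander_id, bloch_norm_id in Hc by exact halpha. lra.
Qed.
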